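(* Let $B_1,\dots,B_n$ be components with pairwise disjoint action sets and $\gamma$ a set of interactions over them. For each action $a\in\mathit{Act}(\gamma)$ let $k_a\ge0$ be a constant such that, in every execution of the component owning $a$, any two consecutive executions of $a$ are separated by at least $k_a$ time units. Let $\mathit{CI}(B_i^h)$ be the component invariants and $\mathit{II}(\gamma)$ the interaction invariant. Then $\Phi=\exists\mathcal{H}_A\exists\mathcal{H}_\gamma.\big(\bigwedge_i\mathit{CI}(B_i^h)\wedge\mathit{II}(\gamma)\wedge\mathcal{E}^*(\gamma)\wedge\mathcal{S}(\gamma)\big)$ is an invariant of $\|_\gamma B_i$.
   Context: Components and semantics: a component is a timed automaton $B=(L,A,\mathcal{X},T,\mathsf{tpc},s_0)$ with locations $L$, actions $A$, clocks $\mathcal{X}$, edges $(l,(a,g,r),l')\in T$ (action, clock-constraint guard, reset set), time progress conditions $\mathsf{tpc}(l)$, initial configuration $s_0=(l_0,c_0)$. States $(l,\mathbf{v})$, $\mathbf{v}$ a valuation in $\mathbb{R}_{\ge0}$; time transitions $(l,\mathbf{v})\xrightarrow{\delta}(l,\mathbf{v}+\delta)$ if $\mathsf{tpc}(l)$ holds along $[0,\delta]$; discrete transitions $(l,\mathbf{v})\xrightarrow{a}(l',\mathbf{v}[r])$ if $(l,(a,g,r),l')\in T$, $\mathbf{v}\models g$, $\mathbf{v}[r]\models\mathsf{tpc}(l')$; initial states $(l_0,\mathbf{v}_0)$ with $\mathbf{v}_0\models c_0$. A state predicate is an invariant if it holds in every reachable state. Systems: for components $B_i$ with pairwise disjoint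 action sets $A_i$, an interaction is a nonempty $\alpha\subseteq\bigcup_iA_i$ with at most one action per component; $\mathit{Act}(\gamma)=\bigcup_{\alpha\in\gamma}\alpha$. $\|_\gamma B_i$ has locations $\times_iL_i$, clocks $\bigcup_i\mathcal{X}_i$, conjunction of tpc's and initial constraints, and for each $\alpha=\{a_i\}_{i\in I}\in\gamma$ and edges $(l_i,(a_i,g_i,r_i),l'_i)\in T_i$ ($i\in I$) a joint edge with guard $\bigwedge_{i\in I}g_i$, reset $\bigcup_{i\in I}r_i$, moving exactly the components in $I$. History clocks: $B^h$ adds fresh clocks $h_0$ and $h_a$ ($a\in A$), adds $h_a$ to the resets of each edge labelled $a$, initial constraint $c_0\wedge h_0=0\wedge\bigwedge_{a\in A}h_a>0$; $h_0$ is shared by all components and never reset nor tested; $\mathcal{H}_A$ is the set of $h_0$ and all $h_a$, $a\in\bigcup_iA_i$. Interaction history clocks $\mathcal{H}_\gamma=\{h_\alpha\mid\alpha\in\gamma\}$ (in the extended system they are reset exactly when $\alpha$ is executed). $\exists S$ quantifies over nonnegative reals. Invariants used: $\mathit{CI}(B^h)$ is the disjunction of $\mathit{at}(l)\wedge\zeta$ over all symbolic states $(l,\zeta)$ reachable in the (normalised) zone graph of $B^h$; it is an invariant of $B^h$. $\mathit{II}(\gamma)$ is a predicate over locations only which is an invariant of $\|_\gamma B_i$. Glue constraints: $\mathcal{E}^*(\gamma)=\bigwedge_{a\in\mathit{Act}(\gamma)}h_a=\min_{\alpha\in\gamma,\,a\in\alpha}h_\alpha$ and $\mathcal{S}(\gamma)=\bigwedge_{a\in\mathit{Act}(\gamma)}\bigwedge_{\alpha\ne\beta\in\gamma,\,a\in\alpha\cap\beta}|h_\alpha-h_\beta|\ge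 k_a$. *)

From Stdlib Require Import Reals List.
Import ListNotations.
Open Scope R_scope.

Inductive cmp := CLt | CLe | CEq | CGe | CGt.

Definition cmp_sem (o : cmp) (x y : R) : Prop :=
  match o with
  | CLt => x < y | CLe => x <= y | CEq => x = y | CGe => x >= y | CGt => x > y
  end.

Inductive cc (X : Type) : Type :=
| CCTrue
| CCAtom (x : X) (o : cmp) (c : nat)
| CCDiff (x y : X) (o : cmp) (c : nat)
| CCAnd (g1 g2 : cc X).
Arguments CCTrue {X}.
Arguments CCAtom {X} x o c.
Arguments CCDiff {X} x y o c.
Arguments CCAnd {X} g1 g2.

Fixpoint ccsat {X : Type} (g : cc X) (v : X -> R) : Prop :=
  match g with
  | CCTrue => True
  | CCAtom x o c => cmp_sem o (v x) (INR c)
  | CCDiff x y o c => cmp_sem o (v x - v y) (INR c)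
  | CCAnd g1 g2 => ccsat g1 v /\ ccsat g2 v
  end.

Fixpoint cc_map {X Y : Type} (f : X -> Y) (g : cc X) : cc Y :=
  match g with
  | CCTrue => CCTrue
  | CCAtom x o c => CCAtom (f x) o c
  | CCDiff x y o c => CCDiff (f x) (f y) o c
  | CCAnd g1 g2 => CCAnd (cc_map f g1) (cc_map f g2)
  end.

Record TA : Type := {
  loc : Type; act : Type; clk : Type;
  locs : list loc; locs_all : forall l, In l locs;
  acts : list act; acts_all : forall a, In a acts;
  clks : list clk; clks_all : forall x, In x clks;
  edges : list (loc * act * cc clk * list clk * loc);
  tpc : loc -> cc clk;
  l0 : loc;
  c0 : cc clk }.

Definition shift {X : Type} (v : X -> R) (d : R) : X -> R := fun x => v x + d.

Definition reset_rel {X : Type} (r : list X) (v v' : X -> R) : Prop :=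
  forall x, (In x r -> v' x = 0) /\ (~ In x r -> v' x = v x).

Inductive lab (A : Type) : Type :=
| LDelay (d : R)
| LAct (a : A).
Arguments LDelay {A} d.
Arguments LAct {A} a.

Definition ta_state (B : TA) : Type := (loc B * (clk B -> R))%type.

Inductive ta_step (B : TA) : ta_state B -> lab (act B) -> ta_state B -> Prop :=
| ts_delay (l : loc B) (v : clk B -> R) (d : R) :
    0 <= d ->
    (forall t, 0 <= t <= d -> ccsat (tpc B l) (shift v t)) ->
    ta_step B (l, v) (LDelay d) (l, shift v d)
| ts_act (l : loc B) (a : act B) (g : cc (clk B)) (r : list (clk B)) (l' : loc B)
         (v v' : clk B -> R) :
    In (l, a, g, r, l') (edges B) ->
    ccsat g v -> reset_rel r v v' -> ccsat (tpc B l') v' ->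
    ta_step B (l, v) (LAct a) (l', v').

Definition ta_init (B : TA) (s : ta_state B) : Prop :=
  fst s = l0 B /\ (forall x, 0 <= snd s x) /\ ccsat (c0 B) (snd s).

Inductive exec {S Lb : Type} (step : S -> Lb -> S -> Prop) : S -> list Lb -> S -> Prop :=
| ex_nil (s : S) : exec step s [] s
| ex_cons (s : S) (a : Lb) (s' : S) (w : list Lb) (s'' : S) :
    step s a s' -> exec step s' w s'' -> exec step s (a :: w) s''.

Definition reachable {S Lb : Type} (init : S -> Prop) (step : S -> Lb -> S -> Prop)
  (s : S) : Prop :=
  exists s0 w, init s0 /\ exec step s0 w s.

Definition invariant {S Lb : Type} (init : S -> Prop) (step : S -> Lb -> S -> Prop)
  (P : S -> Prop) : Prop :=
  forall s, reachable init step s -> P s.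

Fixpoint delay_sum {A : Type} (w : list (lab A)) : R :=
  match w with
  | [] => 0
  | LDelay d :: w' => d + delay_sum w'
  | LAct _ :: w' => delay_sum w'
  end.

Definition min_sep (B : TA) (a : act B) (k : R) : Prop :=
  forall (s0 s' : ta_state B) (w1 w : list (lab (act B))),
    ta_init B s0 ->
    exec (ta_step B) s0 (w1 ++ LAct a :: w ++ [LAct a]) s' ->
    ~ In (LAct a) w ->
    k <= delay_sum w.

Inductive hclk (X A : Type) : Type :=
| HOrig (x : X)
| H0
| HAct (a : A).
Arguments HOrig {X A} x.
Arguments H0 {X A}.
Arguments HAct {X A} a.

Definition hclks (B : TA) : list (hclk (clk B) (act B)) :=
  map HOrig (clks B) ++ H0 :: map HAct (acts B).

Lemma hclks_all (B : TA) : forall x, In x (hclks B).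
Proof.
  intros [x| |a]; unfold hclks; apply in_or_app.
  - left; apply in_map, clks_all.
  - right; left; reflexivity.
  - right; right; apply in_map, acts_all.
Qed.

Definition hist_edge (B : TA) (e : loc B * act B * cc (clk B) * list (clk B) * loc B)
  : loc B * act B * cc (hclk (clk B) (act B)) * list (hclk (clk B) (act B)) * loc B :=
  match e with
  | (l, a, g, r, l') => (l, a, cc_map HOrig g, HAct a :: map HOrig r, l')
  end.

Definition hist_c0 (B : TA) : cc (hclk (clk B) (act B)) :=
  CCAnd (cc_map HOrig (c0 B))
    (CCAnd (CCAtom H0 CEq 0)
       (fold_right (fun a g => CCAnd (CCAtom (HAct a) CGt 0) g) CCTrue (acts B))).

Definition hist (B : TA) : TA := {|
  loc := loc B; act := act B; clk := hclk (clk B) (act B);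
  locs := locs B; locs_all := locs_all B;
  acts := acts B; acts_all := acts_all B;
  clks := hclks B; clks_all := hclks_all B;
  edges := map (hist_edge B) (edges B);
  tpc := fun l => cc_map HOrig (tpc B l);
  l0 := l0 B;
  c0 := hist_c0 B |}.

(* Actions of the system are pairs (i, a) with a an action of B_i (so the action
   sets are disjoint by construction); an interaction picks at most one action
   per component. *)
Definition interaction {I : Type} (B : I -> TA) : Type := forall i, option (act (B i)).

Definition sys_state {I : Type} (B : I -> TA) : Type :=
  ((forall i, loc (B i)) * ({i : I & clk (B i)} -> R))%type.

Definition proj {I : Type} {B : I -> TA} (v : {i : I & clk (B i)} -> R) (i : I)
  : clk (B i) -> R := fun x => v (existT _ i x).

Definition sys_tpc {I : Type} (B : I -> TA) (l : forall i, loc (B i))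
  (v : {i : I & clk (B i)} -> R) : Prop :=
  forall i, ccsat (tpc (B i) (l i)) (proj v i).

Definition sys_init {I : Type} (B : I -> TA) (s : sys_state B) : Prop :=
  (forall i, fst s i = l0 (B i)) /\ (forall c, 0 <= snd s c) /\
  (forall i, ccsat (c0 (B i)) (proj (snd s) i)).

Definition edge_of (T : TA) : Type := (loc T * act T * cc (clk T) * list (clk T) * loc T)%type.

Inductive sys_step {I : Type} (B : I -> TA) (gamma : interaction B -> Prop)
  : sys_state B -> lab (interaction B) -> sys_state B -> Prop :=
| ss_delay (l : forall i, loc (B i)) (v : {i : I & clk (B i)} -> R) (d : R) :
    0 <= d ->
    (forall t, 0 <= t <= d -> sys_tpc B l (shift v t)) ->
    sys_step B gamma (l, v) (LDelay d) (l, shift v d)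
| ss_act (alpha : interaction B) (e : forall i, option (edge_of (B i)))
         (l l' : forall i, loc (B i)) (v v' : {i : I & clk (B i)} -> R) :
    gamma alpha ->
    (forall i,
       match alpha i, e i with
       | None, None => l' i = l i /\ (forall x, proj v' i x = proj v i x)
       | Some a, Some (li, ai, g, r, li') =>
           In (li, ai, g, r, li') (edges (B i)) /\ li = l i /\ ai = a /\ li' = l' i /\
           ccsat g (proj v i) /\ reset_rel r (proj v i) (proj v' i)
       | _, _ => False
       end) ->
    sys_tpc B l' v' ->
    sys_step B gamma (l, v) (LAct alpha) (l', v').

Definition inAct {I : Type} {B : I -> TA} (gamma : interaction B -> Prop) (i : I)
  (a : act (B i)) : Prop :=
  exists alpha, gamma alpha /\ alpha i = Some a.

Definition hval {X A : Type} (v : X -> R) (h0 : R) (ha : A -> R) : hclk X A -> R :=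
  fun c => match c with HOrig x => v x | H0 => h0 | HAct a => ha a end.

Definition Estar {I : Type} {B : I -> TA} (gamma : interaction B -> Prop)
  (ha : forall i, act (B i) -> R) (hg : interaction B -> R) : Prop :=
  forall i a, inAct gamma i a ->
    exists alpha, gamma alpha /\ alpha i = Some a /\ ha i a = hg alpha /\
      (forall beta, gamma beta -> beta i = Some a -> hg alpha <= hg beta).

Definition Sep {I : Type} {B : I -> TA} (gamma : interaction B -> Prop)
  (k : forall i, act (B i) -> R) (hg : interaction B -> R) : Prop :=
  forall i a alpha beta, gamma alpha -> gamma beta -> alpha <> beta ->
    alpha i = Some a -> beta i = Some a -> Rabs (hg alpha - hg beta) >= k i a.

Definition Phi {I : Type} (B : I -> TA) (gamma : interaction B -> Prop)
  (k : forall i, act (B i) -> R)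
  (CI : forall i, loc (hist (B i)) -> (clk (hist (B i)) -> R) -> Prop)
  (II : (forall i, loc (B i)) -> Prop) (s : sys_state B) : Prop :=
  exists (h0 : R) (ha : forall i, act (B i) -> R) (hg : interaction B -> R),
    0 <= h0 /\ (forall i a, 0 <= ha i a) /\ (forall alpha, 0 <= hg alpha) /\
    (forall i, CI i (fst s i) (hval (proj (snd s) i) h0 (ha i))) /\
    II (fst s) /\ Estar gamma ha hg /\ Sep gamma k hg.

(* Along a run of the product, let [h0] be the elapsed time, [h_alpha] the time since the
   last execution of [alpha], and [h_a] the time since the last execution of [a]; before
   their first occurrence, the interaction clocks start at distinct multiples of a bound
   [K] of all [k_a], and [h_a] at the least [h_alpha] with [a] in [alpha] (or at [K]).  Projected to
   [B_i] the run is a run of [B_i^h], so [CI(B_i^h)] holds.  [E*] is preserved since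
   [h_alpha] and the [h_a], [a] in [alpha], are reset together.  When [alpha] fires, any
   [beta <> alpha] sharing an action [a] has [h_beta >= h_a >= k_a] by [E*] and the
   minimal separation of [a], so [S] is preserved. *)

From Stdlib Require Import Reals List Lra Cantor Wf_nat FinFun.
From Stdlib Require Import ClassicalEpsilon FunctionalExtensionality.
Import ListNotations.
Open Scope R_scope.

Lemma exec_snoc {S Lb : Type} (step : S -> Lb -> S -> Prop) s w s' a s'' :
  exec step s w s' -> step s' a s'' -> exec step s (w ++ [a]) s''.
Proof.
  induction 1 as [|s b s1 w s2 Hb _ IH]; intros Hst; simpl.
  - econstructor; [exact Hst | constructor].
  - econstructor; [exact Hb | auto].
Qed.

Lemma reachable_step {S Lb : Type} (init : S -> Prop) (step : S -> Lb -> S -> Prop) s a s' :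
  reachable init step s -> step s a s' -> reachable init step s'.
Proof.
  intros [s0 [w [Hi Hw]]] Hs. exists s0, (w ++ [a]). split; [exact Hi|].
  eapply exec_snoc; eauto.
Qed.

Lemma inductive_invariant {S Lb : Type} (init : S -> Prop) (step : S -> Lb -> S -> Prop)
  (P : S -> Prop) :
  (forall s, init s -> P s) -> (forall s a s', P s -> step s a s' -> P s') ->
  invariant init step P.
Proof.
  intros Hinit Hstep s [s0 [w [Hi Hw]]]. apply Hinit in Hi.
  induction Hw; eauto.
Qed.

Lemma not_in_snoc {A : Type} (x y : A) (w : list A) : ~ In x w -> y <> x -> ~ In x (w ++ [y]).
Proof. intros Hw Hy Hin. apply in_app_or in Hin. destruct Hin as [|[|[]]]; auto. Qed.

Lemma delay_sum_app {A : Type} (w1 w2 : list (lab A)) :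
  delay_sum (w1 ++ w2) = delay_sum w1 + delay_sum w2.
Proof.
  induction w1 as [|[d|b] w1 IH]; simpl; rewrite ?IH; ring.
Qed.

Lemma ccsat_cc_map {X Y : Type} (f : X -> Y) (g : cc X) (w : Y -> R) :
  ccsat (cc_map f g) w <-> ccsat g (fun x => w (f x)).
Proof. induction g; simpl; tauto. Qed.

Lemma list_upper_bound {A : Type} (f : A -> R) (l : list A) :
  exists M, forall x, In x l -> f x <= M.
Proof.
  induction l as [|y l [M HM]]; [exists 0; intros x []|].
  exists (Rmax (f y) M). intros x [<-|Hx]; [apply Rmax_l|].
  apply Rle_trans with M; [auto | apply Rmax_r].
Qed.

Lemma exists_code_min {T : Type} (c : T -> nat) (P : T -> Prop) :
  (exists t, P t) -> exists t, P t /\ forall u, P u -> (c t <= c u)%nat.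
Proof.
  intros [t0 Ht0].
  destruct (dec_inh_nat_subset_has_unique_least_element (fun n => exists t, P t /\ c t = n))
    as [n [[[t [Ht <-]] Hmin] _]].
  - intros n. destruct (excluded_middle_informative (exists t, P t /\ c t = n)); tauto.
  - eauto.
  - exists t. split; [exact Ht|]. intros u Hu. apply Hmin. eauto.
Qed.

Definition list_index {A : Type} (l : list A) (Hl : Full l) (a : A) : nat :=
  proj1_sig (constructive_indefinite_description _ (In_nth_error l a (Hl a))).

Lemma list_index_inj {A : Type} (l : list A) (Hl : Full l) : Injective (list_index l Hl).
Proof.
  intros x y Hxy.
  assert (Hnth : forall a, nth_error l (list_index l Hl a) = Some a).
  { intros a. unfold list_index. apply proj2_sig. }
  apply (f_equal (nth_error l)) in Hxy. rewrite !Hnth in Hxy. congruence.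
Qed.

Definition option_code {A : Type} (c : A -> nat) (o : option A) : nat :=
  match o with None => 0%nat | Some a => S (c a) end.

Lemma option_code_inj {A : Type} (c : A -> nat) : Injective c -> Injective (option_code c).
Proof.
  intros Hc [x|] [y|] Hxy; simpl in Hxy; try discriminate; [|reflexivity].
  f_equal. apply Hc. congruence.
Qed.

Definition dep_fun_code {I : Type} (Is : list I) {T : I -> Type} (c : forall i, T i -> nat)
  (f : forall i, T i) : nat :=
  fold_right (fun i n => Cantor.to_nat (c i (f i), n)) 0%nat Is.

Lemma dep_fun_code_inj {I : Type} (Is : list I) {T : I -> Type} (c : forall i, T i -> nat) :
  Full Is -> (forall i, Injective (c i)) -> Injective (dep_fun_code Is c).
Proof.
  intros HIs Hc f g Hfg. apply functional_extensionality_dep. intros i. apply Hc.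
  generalize (HIs i). clear HIs. unfold dep_fun_code in Hfg.
  induction Is as [|j Is IH]; [intros []|]. cbn [fold_right] in Hfg.
  apply (f_equal Cantor.of_nat) in Hfg. rewrite !Cantor.cancel_of_to in Hfg.
  injection Hfg as Hj Hrest. intros [<-|Hi]; auto.
Qed.

Lemma INR_dist_ge_1 (m n : nat) : m <> n -> 1 <= Rabs (INR m - INR n).
Proof.
  intros Hmn. destruct (Nat.lt_gt_cases m n) as [[Hlt|Hlt] _]; [exact Hmn| |];
    apply le_INR in Hlt; rewrite S_INR in Hlt.
  - rewrite Rabs_minus_sym, Rabs_right; lra.
  - rewrite Rabs_right; lra.
Qed.

Lemma hval_shift {X A : Type} (v : X -> R) h0 (ha : A -> R) d :
  hval (shift v d) (h0 + d) (fun a => ha a + d) = shift (hval v h0 ha) d.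
Proof. apply functional_extensionality. intros [x| |a]; reflexivity. Qed.

Definition reset_at {A : Type} (x : A) (f : A -> R) : A -> R :=
  fun y => if excluded_middle_informative (y = x) then 0 else f y.

Lemma reset_at_same {A : Type} (x : A) (f : A -> R) : reset_at x f x = 0.
Proof. unfold reset_at. destruct excluded_middle_informative; congruence. Qed.

Lemma reset_at_other {A : Type} (x y : A) (f : A -> R) : y <> x -> reset_at x f y = f y.
Proof. unfold reset_at. destruct excluded_middle_informative; congruence. Qed.

Lemma reset_at_nonneg {A : Type} (x : A) (f : A -> R) :
  (forall y, 0 <= f y) -> forall y, 0 <= reset_at x f y.
Proof. intros Hf y. unfold reset_at. destruct excluded_middle_informative; [lra | auto]. Qed.

Section History.
Variables (B : TA) (K : R).

Definition since_last (a : act B) (w : list (lab (act B))) (t : R) : Prop :=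
  exists w1 w2, w = w1 ++ LAct a :: w2 /\ ~ In (LAct a) w2 /\ t = delay_sum w2.

(* [K] bounds every minimal separation, so a history clock of an action that has
   not fired yet is kept above [K]. *)
Definition hist_value (a : act B) (w : list (lab (act B))) (t : R) : Prop :=
  (~ In (LAct a) w /\ K <= t) \/ since_last a w t.

Lemma hist_value_delay a w t d :
  0 <= d -> hist_value a w t -> hist_value a (w ++ [LDelay d]) (t + d).
Proof.
  intros Hd [[Hw Ht]|[w1 [w2 [-> [Hw2 ->]]]]].
  - left. split; [apply not_in_snoc; [exact Hw | discriminate] | lra].
  - right. exists w1, (w2 ++ [LDelay d]). rewrite <- app_assoc, delay_sum_app. simpl.
    split; [reflexivity|]. split; [apply not_in_snoc; [exact Hw2 | discriminate] | ring].
Qed.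

Lemma hist_value_other a b w t : b <> a -> hist_value a w t -> hist_value a (w ++ [LAct b]) t.
Proof.
  intros Hba [[Hw Ht]|[w1 [w2 [-> [Hw2 ->]]]]].
  - left. split; [apply not_in_snoc; congruence | exact Ht].
  - right. exists w1, (w2 ++ [LAct b]). rewrite <- app_assoc, delay_sum_app. simpl.
    split; [reflexivity|]. split; [apply not_in_snoc; congruence | ring].
Qed.

Lemma hist_value_fired a w : hist_value a (w ++ [LAct a]) 0.
Proof. right. exists w, []. simpl. auto. Qed.

Lemma reset_rel_hist a (r : list (clk B)) v v' h0 (ha : act B -> R) :
  reset_rel r v v' ->
  reset_rel (HAct a :: map HOrig r) (hval v h0 ha) (hval v' h0 (reset_at a ha)).
Proof.
  intros Hr [x| |b]; simpl; rewrite in_map_iff.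
  - specialize (Hr x). split.
    + intros [|[y [[= ->] Hy]]]; [discriminate | tauto].
    + intros Hx. apply Hr. intros Hin. apply Hx. right. eauto.
  - split; [intros [|[y [? _]]]; discriminate | reflexivity].
  - split.
    + intros [[= ->]|[y [? _]]]; [apply reset_at_same | discriminate].
    + intros Hb. apply reset_at_other. intros ->. auto.
Qed.

Lemma hist_init l v (ha : act B -> R) :
  ta_init B (l, v) -> (forall a, 0 < ha a) ->
  ta_init (hist B) ((l, hval v 0 ha) : ta_state (hist B)).
Proof.
  intros [Hl [Hv Hc]] Hha. split; [exact Hl|]. split.
  - intros [x| |a]; simpl; [apply Hv | lra | apply Rlt_le, Hha].
  - simpl. split; [apply ccsat_cc_map, Hc|]. split; [reflexivity|].
    induction (acts B) as [|a al IH]; simpl; [exact I | split; [apply Hha | exact IH]].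
Qed.

Lemma hist_delay_step s d s' h0 (ha : act B -> R) :
  ta_step B s (LDelay d) s' ->
  ta_step (hist B) ((fst s, hval (snd s) h0 ha) : ta_state (hist B)) (LDelay d)
    (fst s', hval (snd s') (h0 + d) (fun a => ha a + d)).
Proof.
  inversion 1 as [l v d' Hd Htpc| ]; subst; simpl. rewrite hval_shift.
  apply (ts_delay (hist B) l (hval v h0 ha) d Hd). intros t Ht. apply ccsat_cc_map, Htpc, Ht.
Qed.

Lemma hist_act_step s a s' h0 (ha : act B -> R) :
  ta_step B s (LAct a) s' ->
  ta_step (hist B) ((fst s, hval (snd s) h0 ha) : ta_state (hist B)) (LAct a)
    (fst s', hval (snd s') h0 (reset_at a ha)).
Proof.
  inversion 1 as [|l a' g r l' v v' He Hg Hr Htpc]; subst; simpl.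
  apply (ts_act (hist B) l a (cc_map HOrig g) (HAct a :: map HOrig r) l').
  - apply (in_map (hist_edge B) _ _ He).
  - apply ccsat_cc_map, Hg.
  - apply reset_rel_hist, Hr.
  - apply ccsat_cc_map, Htpc.
Qed.

Definition tracked (s : ta_state B) (h0 : R) (ha : act B -> R) : Prop :=
  (forall a, 0 <= ha a) /\
  reachable (ta_init (hist B)) (ta_step (hist B))
    ((fst s, hval (snd s) h0 ha) : ta_state (hist B)) /\
  exists s0 w, ta_init B s0 /\ exec (ta_step B) s0 w s /\ forall a, hist_value a w (ha a).

Lemma tracked_init s (ha : act B -> R) :
  0 < K -> ta_init B s -> (forall a, K <= ha a) -> tracked s 0 ha.
Proof.
  intros HK Hs Hha. destruct s as [l v].
  assert (Hpos : forall a, 0 < ha a) by (intros a; specialize (Hha a); lra).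
  split; [intros a; apply Rlt_le, Hpos|]. split.
  - exists (l, hval v 0 ha), []. split; [apply hist_init; auto | constructor].
  - exists (l, v), []. split; [exact Hs|]. split; [constructor|].
    intros a. left. split; [intros [] | apply Hha].
Qed.

Lemma tracked_delay s d s' h0 (ha : act B -> R) :
  tracked s h0 ha -> ta_step B s (LDelay d) s' -> tracked s' (h0 + d) (fun a => ha a + d).
Proof.
  intros [Hnn [Hreach [s0 [w [Hs0 [Hw Hval]]]]]] Hst.
  assert (Hd : 0 <= d) by (inversion Hst; assumption).
  split; [intros a; specialize (Hnn a); lra|]. split.
  - eapply reachable_step; [exact Hreach | apply hist_delay_step, Hst].
  - exists s0, (w ++ [LDelay d]). split; [exact Hs0|]. split.
    + eapply exec_snoc; eauto.
    + intros a. apply hist_value_delay; auto.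
Qed.

Lemma tracked_act s a s' h0 (ha : act B -> R) :
  tracked s h0 ha -> ta_step B s (LAct a) s' -> tracked s' h0 (reset_at a ha).
Proof.
  intros [Hnn [Hreach [s0 [w [Hs0 [Hw Hval]]]]]] Hst.
  split; [apply reset_at_nonneg, Hnn|]. split.
  - eapply reachable_step; [exact Hreach | apply hist_act_step, Hst].
  - exists s0, (w ++ [LAct a]). split; [exact Hs0|]. split.
    + eapply exec_snoc; eauto.
    + intros b. destruct (excluded_middle_informative (b = a)) as [->|Hba].
      * rewrite reset_at_same. apply hist_value_fired.
      * rewrite reset_at_other by exact Hba. apply hist_value_other; auto.
Qed.

(* Firing [a] again closes a segment of the run between two [a]'s whose total delay
   is [ha a]. *)
Lemma tracked_fire s a s' h0 (ha : act B -> R) (k : R) :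
  tracked s h0 ha -> min_sep B a k -> k <= K -> ta_step B s (LAct a) s' -> k <= ha a.
Proof.
  intros [_ [_ [s0 [w [Hs0 [Hw Hval]]]]]] Hsep HkK Hst.
  destruct (Hval a) as [[_ HK]|[w1 [w2 [Hw12 [Hw2 ->]]]]]; [lra|].
  apply (Hsep s0 s' w1 w2 Hs0); [|exact Hw2].
  replace (w1 ++ LAct a :: w2 ++ [LAct a]) with (w ++ [LAct a])
    by (rewrite Hw12, <- app_assoc; reflexivity).
  eapply exec_snoc; eauto.
Qed.

End History.

Section System.
Variables (I : Type) (Is : list I) (HIs : Full Is) (B : I -> TA)
  (gamma : interaction B -> Prop) (k : forall i, act (B i) -> R).

Definition local (s : sys_state B) (i : I) : ta_state (B i) := (fst s i, proj (snd s) i).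

Lemma sys_step_delay_local s d s' :
  sys_step B gamma s (LDelay d) s' ->
  0 <= d /\ forall i, ta_step (B i) (local s i) (LDelay d) (local s' i).
Proof.
  inversion 1 as [l v d' Hd Htpc|]; subst. split; [exact Hd|].
  intros i. apply (ts_delay (B i) (l i) (proj v i) d Hd). intros t Ht. apply (Htpc t Ht i).
Qed.

Lemma sys_step_act_local s alpha s' :
  sys_step B gamma s (LAct alpha) s' ->
  gamma alpha /\ forall i, match alpha i with
                           | None => local s' i = local s i
                           | Some a => ta_step (B i) (local s i) (LAct a) (local s' i)
                           end.
Proof.
  inversion 1 as [|alpha' e l l' v v' Hg Hloc Htpc]; subst. split; [exact Hg|].
  intros i. specialize (Hloc i). unfold local; simpl.
  destruct (alpha i) as [a|]; destruct (e i) as [[[[[li ai] g] r] li']|]; try contradiction.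
  - destruct Hloc as [He [-> [-> [-> [Hgs Hr]]]]].
    eapply ts_act; [exact He | exact Hgs | exact Hr | apply Htpc].
  - destruct Hloc as [-> Hv]. f_equal. apply functional_extensionality, Hv.
Qed.

Lemma action_constant_bound : exists K, 0 < K /\ forall i a, k i a <= K.
Proof.
  destruct (list_upper_bound (fun p : {i : I & act (B i)} => k (projT1 p) (projT2 p))
              (flat_map (fun i => map (existT _ i) (acts (B i))) Is)) as [M HM].
  exists (Rmax 1 M). split; [pose proof (Rmax_l 1 M); lra|]. intros i a.
  apply Rle_trans with M; [|apply Rmax_r]. apply (HM (existT _ i a)).
  apply in_flat_map. exists i. split; [apply HIs | apply in_map, acts_all].
Qed.

Lemma Estar_delay ha hg d :
  Estar gamma ha hg -> Estar gamma (fun i a => ha i a + d) (fun alpha => hg alpha + d).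
Proof.
  intros HE i a Hin. destruct (HE i a Hin) as [alpha [Hg [Ha [Heq Hmin]]]].
  exists alpha. split; [exact Hg|]. split; [exact Ha|]. split; [lra|].
  intros beta Hb Hba. specialize (Hmin beta Hb Hba). lra.
Qed.

Lemma Sep_delay hg d : Sep gamma k hg -> Sep gamma k (fun alpha => hg alpha + d).
Proof.
  intros HS i a alpha beta Ha Hb Hne Hai Hbi.
  replace (hg alpha + d - (hg beta + d)) with (hg alpha - hg beta) by ring. eauto.
Qed.

Definition fire_reset (alpha : interaction B) (ha : forall i, act (B i) -> R) (i : I)
  : act (B i) -> R :=
  match alpha i with Some a => reset_at a (ha i) | None => ha i end.

Lemma fire_reset_fired alpha ha i a : alpha i = Some a -> fire_reset alpha ha i a = 0.
Proof. unfold fire_reset. intros ->. apply reset_at_same. Qed.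

Lemma fire_reset_idle alpha ha i a : alpha i <> Some a -> fire_reset alpha ha i a = ha i a.
Proof.
  unfold fire_reset. destruct (alpha i) as [b|]; [|reflexivity].
  intros Hb. apply reset_at_other. congruence.
Qed.

Lemma Estar_fire alpha ha hg :
  gamma alpha -> (forall beta, 0 <= hg beta) -> Estar gamma ha hg ->
  Estar gamma (fire_reset alpha ha) (reset_at alpha hg).
Proof.
  intros Hg Hnn HE i a Hin.
  destruct (excluded_middle_informative (alpha i = Some a)) as [Ha|Ha].
  - exists alpha. split; [exact Hg|]. split; [exact Ha|].
    rewrite fire_reset_fired, reset_at_same by exact Ha. split; [reflexivity|].
    intros beta _ _. apply reset_at_nonneg, Hnn.
  - destruct (HE i a Hin) as [alpha0 [Hg0 [Ha0 [Heq Hmin]]]].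
    assert (Hne : forall beta, beta i = Some a -> beta <> alpha) by (intros ? ? ->; auto).
    exists alpha0. split; [exact Hg0|]. split; [exact Ha0|].
    rewrite fire_reset_idle, reset_at_other by auto. split; [exact Heq|].
    intros beta Hb Hba. rewrite !reset_at_other by auto. auto.
Qed.

Lemma Sep_fire alpha ha hg :
  (forall beta, 0 <= hg beta) -> (forall i a, alpha i = Some a -> k i a <= ha i a) ->
  Estar gamma ha hg -> Sep gamma k hg -> Sep gamma k (reset_at alpha hg).
Proof.
  intros Hnn Hfire HE HS.
  assert (Hfar : forall i a beta, gamma beta -> beta <> alpha -> alpha i = Some a ->
                   beta i = Some a -> k i a <= hg beta).
  { intros i a beta Hb Hne Ha Hba.
    destruct (HE i a (ex_intro _ beta (conj Hb Hba))) as [alpha0 [_ [_ [Heq Hmin]]]].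
    specialize (Hmin beta Hb Hba). specialize (Hfire i a Ha). lra. }
  intros i a b1 b2 Hb1 Hb2 Hne H1 H2.
  destruct (excluded_middle_informative (b1 = alpha)) as [->|N1];
  destruct (excluded_middle_informative (b2 = alpha)) as [->|N2].
  - congruence.
  - rewrite reset_at_same, reset_at_other by exact N2.
    rewrite Rabs_minus_sym, Rminus_0_r, Rabs_right by (apply Rle_ge, Hnn).
    apply Rle_ge. eapply Hfar; eauto.
  - rewrite reset_at_same, reset_at_other by exact N1.
    rewrite Rminus_0_r, Rabs_right by (apply Rle_ge, Hnn).
    apply Rle_ge. eapply Hfar; eauto.
  - rewrite !reset_at_other by assumption. eauto.
Qed.

Definition interaction_code : interaction B -> nat :=
  dep_fun_code Is (fun i => option_code (list_index (acts (B i)) (acts_all (B i)))).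

Lemma interaction_code_inj : Injective interaction_code.
Proof.
  apply dep_fun_code_inj; [exact HIs|]. intros i. apply option_code_inj, list_index_inj.
Qed.

Variables (K : R) (HK : 0 < K) (HkK : forall i a, k i a <= K).

Definition init_hg (alpha : interaction B) : R := K * INR (S (interaction_code alpha)).

Lemma init_hg_ge alpha : K <= init_hg alpha.
Proof.
  unfold init_hg. rewrite S_INR. pose proof (pos_INR (interaction_code alpha)). nra.
Qed.

Lemma init_hg_le alpha beta :
  (interaction_code alpha <= interaction_code beta)%nat -> init_hg alpha <= init_hg beta.
Proof.
  intros H. unfold init_hg. apply Rmult_le_compat_l; [lra|]. apply le_INR. auto with arith.
Qed.

Lemma init_hg_sep alpha beta : alpha <> beta -> K <= Rabs (init_hg alpha - init_hg beta).
Proof.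
  intros Hne. unfold init_hg. rewrite <- Rmult_minus_distr_l, Rabs_mult, (Rabs_right K) by lra.
  assert (Hc : S (interaction_code alpha) <> S (interaction_code beta))
    by (intros Heq; apply Hne, interaction_code_inj; auto).
  pose proof (INR_dist_ge_1 _ _ Hc). nra.
Qed.

Lemma init_ha_exists : exists ha, (forall i a, K <= ha i a) /\ Estar gamma ha init_hg.
Proof.
  assert (Hpt : forall i a, exists r, K <= r /\
            (inAct gamma i a -> exists alpha, gamma alpha /\ alpha i = Some a /\
               r = init_hg alpha /\
               forall beta, gamma beta -> beta i = Some a -> init_hg alpha <= init_hg beta)).
  { intros i a. destruct (excluded_middle_informative (inAct gamma i a)) as [Hin|Hin].
    - destruct (exists_code_min interaction_code _ Hin) as [alpha [[Hg Ha] Hmin]].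
      exists (init_hg alpha). split; [apply init_hg_ge|]. intros _.
      exists alpha. do 3 (split; [auto|]). intros beta Hb Hba. apply init_hg_le, Hmin. auto.
    - exists K. split; [lra | tauto]. }
  exists (fun i a => proj1_sig (constructive_indefinite_description _ (Hpt i a))).
  split; intros i a; destruct (constructive_indefinite_description _ (Hpt i a)) as [r [Hr Hmin]];
    simpl; auto.
Qed.

Definition sys_inv (s : sys_state B) : Prop :=
  exists h0 ha hg, 0 <= h0 /\ (forall alpha, 0 <= hg alpha) /\
    (forall i, tracked (B i) K (local s i) h0 (ha i)) /\
    Estar gamma ha hg /\ Sep gamma k hg.

Lemma sys_inv_init s : sys_init B s -> sys_inv s.
Proof.
  intros [Hl [Hv Hc]]. destruct init_ha_exists as [ha [Hha HE]].
  exists 0, ha, init_hg. split; [lra|]. split.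
  { intros alpha. pose proof (init_hg_ge alpha). lra. }
  split; [|split; [exact HE|]].
  - intros i. apply tracked_init; [exact HK| |apply Hha].
    split; [apply Hl|]. split; [intros x; apply Hv | apply Hc].
  - intros i a alpha beta _ _ Hne _ _. pose proof (init_hg_sep alpha beta Hne).
    specialize (HkK i a). lra.
Qed.

Hypothesis Hk : forall i a, inAct gamma i a -> min_sep (B i) a (k i a).

Lemma sys_inv_step s lb s' : sys_inv s -> sys_step B gamma s lb s' -> sys_inv s'.
Proof.
  intros [h0 [ha [hg [Hh0 [Hhg [Htr [HE HS]]]]]]] Hst. destruct lb as [d|alpha].
  - destruct (sys_step_delay_local _ _ _ Hst) as [Hd Hloc].
    exists (h0 + d), (fun i a => ha i a + d), (fun alpha => hg alpha + d).
    split; [lra|]. split; [intros alpha; specialize (Hhg alpha); lra|].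
    split; [intros i; eapply tracked_delay; [apply Htr | apply Hloc]|].
    split; [apply Estar_delay, HE | apply Sep_delay, HS].
  - destruct (sys_step_act_local _ _ _ Hst) as [Hg Hloc].
    assert (Hfire : forall i a, alpha i = Some a -> k i a <= ha i a).
    { intros i a Ha. specialize (Hloc i). rewrite Ha in Hloc.
      eapply tracked_fire; [apply Htr | apply Hk; exists alpha; auto | apply HkK | exact Hloc]. }
    exists h0, (fire_reset alpha ha), (reset_at alpha hg).
    split; [exact Hh0|]. split; [apply reset_at_nonneg, Hhg|].
    split; [|split; [apply Estar_fire; auto | apply (Sep_fire alpha ha); auto]].
    intros i. specialize (Hloc i). unfold fire_reset.
    destruct (alpha i) as [a|].
    + eapply tracked_act; eauto.
    + rewrite Hloc. apply Htr.
Qed.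

Lemma sys_inv_invariant : invariant (sys_init B) (sys_step B gamma) sys_inv.
Proof. apply inductive_invariant; [exact sys_inv_init | exact sys_inv_step]. Qed.

End System.

Theorem corollary2
  (I : Type) (Is : list I) (HIs : forall i, In i Is)
  (B : I -> TA)
  (gamma : interaction B -> Prop)
  (Hgamma_ne : forall alpha, gamma alpha -> exists i, alpha i <> None)
  (k : forall i, act (B i) -> R)
  (Hk0 : forall i a, inAct gamma i a -> 0 <= k i a)
  (Hk : forall i a, inAct gamma i a -> min_sep (B i) a (k i a))
  (CI : forall i, loc (hist (B i)) -> (clk (hist (B i)) -> R) -> Prop)
  (HCI : forall i, invariant (ta_init (hist (B i))) (ta_step (hist (B i)))
                     (fun s => CI i (fst s) (snd s)))
  (II : (forall i, loc (B i)) -> Prop)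
  (HII : invariant (sys_init B) (sys_step B gamma) (fun s => II (fst s))) :
  invariant (sys_init B) (sys_step B gamma) (Phi B gamma k CI II).
Proof.
  destruct (action_constant_bound I Is HIs B k) as [K [HK HkK]].
  intros s Hs.
  destruct (sys_inv_invariant I Is HIs B gamma k K HK HkK Hk s Hs)
    as [h0 [ha [hg [Hh0 [Hhg [Htr [HE HS]]]]]]].
  exists h0, ha, hg. split; [exact Hh0|].
  split; [intros i; apply (Htr i)|]. split; [exact Hhg|].
  split; [intros i; apply (HCI i _ (proj1 (proj2 (Htr i))))|].
  split; [apply (HII s Hs)|]. split; [exact HE | exact HS].
Qed.
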